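(* Let $R$ be a commutative ring and $\sigma$ a homomorphism between projective $R$-modules which is of finite type. Then there is a Gabriel filter of finite type $\mathcal{G}$ over $R$ such that $\mathcal{D}_\sigma=\operatorname{Div}\mathcal{G}$.
   Context: For $\alpha:A\to B$, $\mathcal{D}_\alpha=\{X\mid\operatorname{Hom}_R(\alpha,X)\text{ surjective}\}$; $\sigma$ is of finite type if $\mathcal{D}_\sigma=\bigcap_i\mathcal{D}_{\sigma_i}$ for a set of homomorphisms $\sigma_i$ between finitely generated projective modules. A Gabriel filter is a filter $\mathcal{G}$ of ideals such that (i) $I\in\mathcal{G}$, $x\in R$ imply $(I:x)=\{r\mid xr\in I\}\in\mathcal{G}$, and (ii) if $J$ is an ideal and there is $I\in\mathcal{G}$ with $(J:x)\in\mathcal{G}$ for all $x\in I$, then $J\in\mathcal{G}$. It is of finite type if it has a filter basis of finitely generated ideals. $\operatorname{Div}\mathcal{G}=\{M\mid MI=M\text{ for all }I\in\mathcal{G}\}$ (the $\mathcal{G}$-divisible modules). *)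

From HB Require Import structures.
From mathcomp Require Import all_boot all_order all_algebra.
Set Implicit Arguments. Unset Strict Implicit. Unset Printing Implicit Defensive.
Import GRing.Theory.
Local Open Scope ring_scope.

Section Defs.
Variable R : comNzRingType.

Definition is_lin (M N : lmodType R) (f : M -> N) : Prop :=
  forall (a : R) (u v : M), f (a *: u + v) = a *: f u + f v.

(* D_alpha = { X | Hom_R(alpha, X) surjective } *)
Definition D_of (A B : lmodType R) (alpha : A -> B) (X : lmodType R) : Prop :=
  forall f : A -> X, is_lin f ->
    exists g : B -> X, is_lin g /\ forall a, g (alpha a) = f a.

Definition projective_mod (P : lmodType R) : Prop :=
  forall (M N : lmodType R) (p : M -> N) (f : P -> N),
    is_lin p -> (forall y, exists x, p x = y) -> is_lin f ->
    exists g : P -> M, is_lin g /\ forall x, p (g x) = f x.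

Definition fin_gen_mod (M : lmodType R) : Prop :=
  exists (n : nat) (s : 'I_n -> M),
    forall m : M, exists c : 'I_n -> R, m = \sum_(i < n) c i *: s i.

Definition finite_type_hom (A B : lmodType R) (sigma : A -> B) : Prop :=
  exists (I : Type) (P Q : I -> lmodType R) (s : forall i, P i -> Q i),
    (forall i, is_lin (s i)) /\
    (forall i, projective_mod (P i) /\ fin_gen_mod (P i)) /\
    (forall i, projective_mod (Q i) /\ fin_gen_mod (Q i)) /\
    (forall X : lmodType R, D_of sigma X <-> forall i, D_of (s i) X).

Definition is_ideal (I : R -> Prop) : Prop :=
  I 0 /\ (forall x y, I x -> I y -> I (x + y)) /\ (forall r x, I x -> I (r * x)).

Definition colon (I : R -> Prop) (x : R) : R -> Prop := fun r => I (x * r).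

Definition gabriel_filter (G : (R -> Prop) -> Prop) : Prop :=
  (forall I, G I -> is_ideal I) /\
  G (fun _ => True) /\
  (forall I J, G I -> is_ideal J -> (forall x, I x -> J x) -> G J) /\
  (forall I J, G I -> G J -> G (fun x => I x /\ J x)) /\
  (forall I x, G I -> G (colon I x)) /\
  (forall J, is_ideal J ->
     (exists I, G I /\ forall x, I x -> G (colon J x)) -> G J).

Definition fg_ideal (J : R -> Prop) : Prop :=
  exists s : seq R, forall x,
    J x <-> exists c : 'I_(size s) -> R, x = \sum_(i < size s) c i * s`_i.

Definition gabriel_finite_type (G : (R -> Prop) -> Prop) : Prop :=
  forall I, G I -> exists J, G J /\ fg_ideal J /\ forall x, J x -> I x.

Definition mod_eq_MI (M : lmodType R) (I : R -> Prop) : Prop :=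
  forall m : M, exists (n : nat) (c : 'I_n -> R) (v : 'I_n -> M),
    (forall i, I (c i)) /\ m = \sum_(i < n) c i *: v i.

Definition Div (G : (R -> Prop) -> Prop) (M : lmodType R) : Prop :=
  forall I, G I -> mod_eq_MI M I.

End Defs.

(* A homomorphism between finitely generated projectives is a retract of a
   matrix [A : R^(m+n) -> R^n], and [Hom(-, X)] turns the surjectivity test into
   "[X^N -> X^n], [y |-> A y] is onto".  That holds iff [X = I X] for the ideal
   [I] of maximal minors of [A]: adjugates produce every [det(minor) * u] in the
   image, and conversely expanding a minor along a row lowers the size of [A].
   Hence [D_sigma] is cut out by the conditions [X = I_i X] for finitely
   generated ideals [I_i], and the ideals [J] containing a finite [s] with
   [X = s X] for all [X] in [D_sigma] form the required Gabriel filter. *)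
From HB Require Import structures.
From mathcomp Require Import all_boot all_order all_algebra.
Set Implicit Arguments. Unset Strict Implicit. Unset Printing Implicit Defensive.
Import GRing.Theory.
Local Open Scope ring_scope.

Section Divisibility.
Variable R : comNzRingType.
Implicit Types (s : seq R) (X Y : lmodType R).

Section Linear.
Variables (M N : lmodType R) (f : M -> N).
Hypothesis f_lin : is_lin f.

Lemma is_lin0 : f 0 = 0.
Proof.
have := f_lin 1 0 0; rewrite scaler0 add0r scale1r => E.
by have := congr1 (fun z => z - f 0) E; rewrite addrK subrr.
Qed.

Lemma is_linD u v : f (u + v) = f u + f v.
Proof. by have := f_lin 1 u v; rewrite !scale1r. Qed.

Lemma is_linZ a u : f (a *: u) = a *: f u.
Proof. by have := f_lin a u 0; rewrite !addr0 is_lin0 addr0. Qed.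

Lemma is_linB u v : f (u - v) = f u - f v.
Proof. by have := f_lin (-1) v u; rewrite !scaleN1r addrC => ->; rewrite addrC. Qed.

Lemma is_lin_sum (I : Type) (r : seq I) (P : pred I) (F : I -> M) :
  f (\sum_(i <- r | P i) F i) = \sum_(i <- r | P i) f (F i).
Proof. exact: (big_morph f is_linD is_lin0). Qed.

End Linear.

Lemma is_lin_id (M : lmodType R) : is_lin (fun x : M => x).
Proof. by []. Qed.

Lemma is_lin_comp (M N L : lmodType R) (f : M -> N) (g : N -> L) :
  is_lin f -> is_lin g -> is_lin (fun x => g (f x)).
Proof. by move=> hf hg a u v; rewrite hf hg. Qed.

Lemma is_lin_add (M N : lmodType R) (f g : M -> N) :
  is_lin f -> is_lin g -> is_lin (fun x => f x + g x).
Proof. by move=> hf hg a u v; rewrite hf hg scalerDr addrACA. Qed.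

Lemma is_lin_sub (M N : lmodType R) (f g : M -> N) :
  is_lin f -> is_lin g -> is_lin (fun x => f x - g x).
Proof. by move=> hf hg a u v; rewrite hf hg scalerBr opprD addrACA. Qed.

(* [in_sM s m] says that [m] lies in [I X] for the ideal [I] generated by [s];
   indexing by the duplicate-free [undup s] makes it closed under the
   module operations. *)
Definition in_sM s X (m : X) := exists v : R -> X, m = \sum_(r <- undup s) r *: v r.

Definition sM_full s X := forall m : X, in_sM s m.

Lemma in_sM0 s X : in_sM s (0 : X).
Proof. by exists (fun _ => 0); rewrite big1 // => r _; rewrite scaler0. Qed.

Lemma in_sMD s X (x y : X) : in_sM s x -> in_sM s y -> in_sM s (x + y).
Proof.
move=> [v ->] [w ->]; exists (fun r => v r + w r).
by rewrite -big_split; apply: eq_bigr => r _; rewrite scalerDr.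
Qed.

Lemma in_sMZ s X a (x : X) : in_sM s x -> in_sM s (a *: x).
Proof.
move=> [v ->]; exists (fun r => a *: v r).
by rewrite scaler_sumr; apply: eq_bigr => r _; rewrite !scalerA mulrC.
Qed.

Lemma in_sM_sum s X (I : Type) (r : seq I) (P : pred I) (F : I -> X) :
  (forall i, P i -> in_sM s (F i)) -> in_sM s (\sum_(i <- r | P i) F i).
Proof. by move=> h; elim/big_ind: _ => //; [exact: in_sM0 | exact: in_sMD]. Qed.

Lemma in_sM_scale s X r (w : X) : r \in s -> in_sM s (r *: w).
Proof.
move=> rs; exists (fun r' => if r' == r then w else 0).
rewrite (bigD1_seq r) ?mem_undup ?undup_uniq //= eqxx big1 ?addr0 // => r' /negPf ->.
by rewrite scaler0.
Qed.

Lemma in_sM_subset s s' X (m : X) : {subset s <= s'} -> in_sM s m -> in_sM s' m.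
Proof.
move=> ss [v ->]; rewrite big_seq; apply: in_sM_sum => r.
by rewrite mem_undup => /ss; exact: in_sM_scale.
Qed.

Definition ideal_span s (x : R) :=
  exists c : 'I_(size s) -> R, x = \sum_(i < size s) c i * s`_i.

Lemma is_ideal_sum (J : R -> Prop) (I : Type) (r : seq I) (P : pred I) (F : I -> R) :
  is_ideal J -> (forall i, P i -> J (F i)) -> J (\sum_(i <- r | P i) F i).
Proof. by move=> [J0 [JD _]] h; elim/big_ind: _. Qed.

Lemma is_ideal_span s : is_ideal (ideal_span s).
Proof.
split; first by exists (fun _ => 0); rewrite big1 // => i _; rewrite mul0r.
split.
  move=> x y [c ->] [d ->]; exists (fun i => c i + d i).
  by rewrite -big_split; apply: eq_bigr => i _; rewrite mulrDl.
move=> r x [c ->]; exists (fun i => r * c i).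
by rewrite mulr_sumr; apply: eq_bigr => i _; rewrite mulrA.
Qed.

Lemma ideal_span_mem s r : r \in s -> ideal_span s r.
Proof.
move=> rs; have ir : (index r s < size s)%N by rewrite index_mem.
exists (fun i => if i == Ordinal ir then 1 else 0).
rewrite (bigD1 (Ordinal ir)) //= eqxx mul1r big1 ?addr0 ?nth_index // => i /negPf ->.
by rewrite mul0r.
Qed.

Lemma ideal_span_min (J : R -> Prop) s x :
  is_ideal J -> (forall r, r \in s -> J r) -> ideal_span s x -> J x.
Proof.
move=> hJ hs [c ->]; apply: is_ideal_sum => // i _.
by case: hJ => _ [_ JM]; apply/JM/hs/mem_nth.
Qed.

Lemma sM_full_mod_eq_MI s X (J : R -> Prop) :
  sM_full s X -> (forall r, r \in s -> J r) -> mod_eq_MI X J.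
Proof.
move=> hs hJ m; have [v ->] := hs m.
exists (size (undup s)), (fun i => (undup s)`_i), (fun i => v (undup s)`_i).
split; first by move=> i; apply/hJ; rewrite -mem_undup; apply: mem_nth.
by rewrite (big_nth 0) big_mkord.
Qed.

Lemma mod_eq_MI_span_sM_full s X : mod_eq_MI X (ideal_span s) -> sM_full s X.
Proof.
move=> h m; have [n [c [v [hc ->]]]] := h m.
apply: in_sM_sum => i _; have [d ->] := hc i.
rewrite scaler_suml; apply: in_sM_sum => j _.
by rewrite -scalerA; apply/in_sMZ/in_sM_scale/mem_nth.
Qed.

Lemma is_ideal_colon (I : R -> Prop) x : is_ideal I -> is_ideal (colon I x).
Proof.
move=> [I0 [ID IM]]; rewrite /colon; split; first by rewrite mulr0.
split; first by move=> a b ha hb; rewrite mulrDr; apply: ID.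
by move=> r a ha; rewrite mulrCA; apply: IM.
Qed.

Lemma is_ideal_meet (I J : R -> Prop) :
  is_ideal I -> is_ideal J -> is_ideal (fun x => I x /\ J x).
Proof.
move=> [I0 [ID IM]] [J0 [JD JM]]; split=> //; split.
  by move=> x y [? ?] [? ?]; split; [apply: ID | apply: JD].
by move=> r x [? ?]; split; [apply: IM | apply: JM].
Qed.

Section DivisibilityFilter.
Variable D : lmodType R -> Prop.

Definition div_filter (J : R -> Prop) : Prop :=
  is_ideal J /\ exists s, (forall r, r \in s -> J r) /\ forall X, D X -> sM_full s X.

Lemma div_filter_span s : (forall X, D X -> sM_full s X) -> div_filter (ideal_span s).
Proof. by move=> hs; split; [exact: is_ideal_span | exists s; split=> //; exact: ideal_span_mem]. Qed.

Lemma div_filterT : div_filter (fun _ => True).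
Proof.
split; first by split.
exists [:: 1]; split=> // X _ m.
by rewrite -[m]scale1r; apply/in_sM_scale/mem_head.
Qed.

Lemma div_filter_meet I J : div_filter I -> div_filter J -> div_filter (fun x => I x /\ J x).
Proof.
move=> [hI [s1 [h1 h1']]] [hJ [s2 [h2 h2']]].
split; first exact: is_ideal_meet.
exists [seq a * b | a <- s1, b <- s2]; split.
  move=> r /allpairsP [[a b] /= [ha hb ->]]; case: hI hJ => _ [_ IM] [_ [_ JM]].
  by split; [rewrite mulrC; apply/IM/h1 | apply/JM/h2].
move=> X DX m; have [v ->] := h1' X DX m.
rewrite big_seq; apply: in_sM_sum => a; rewrite mem_undup => ha.
have [w ->] := h2' X DX (v a).
rewrite scaler_sumr big_seq; apply: in_sM_sum => b; rewrite mem_undup => hb.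
by rewrite scalerA; apply/in_sM_scale/allpairs_f.
Qed.

(* If every [colon J r], [r \in s], is in the filter then [s X] lies in [s' X]
   for one finite [s' \subset J]: concatenate the products [r * u]. *)
Lemma div_filter_colon_seq (J : R -> Prop) s :
  (forall r, r \in s -> div_filter (colon J r)) ->
  exists s', (forall r, r \in s' -> J r) /\
    forall X, D X -> forall r, r \in s -> forall v : X, in_sM s' (r *: v).
Proof.
elim: s => [|r0 s IH] h; first by exists [::]; split=> // X _ r.
have [s1 [h1 h1']] := IH (fun r rs => h r (mem_behead (s := r0 :: s) rs)).
have [_ [t [ht ht']]] := h r0 (mem_head _ _).
exists (s1 ++ [seq r0 * u | u <- t]); split.
  by move=> r; rewrite mem_cat => /orP [/h1 // | /mapP [u /ht ? ->]].
move=> X DX r; rewrite in_cons => /orP [/eqP -> | rs] v.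
  have [w ->] := ht' X DX v.
  rewrite scaler_sumr big_seq; apply: in_sM_sum => u; rewrite mem_undup => ut.
  by rewrite scalerA; apply: in_sM_scale; rewrite mem_cat map_f ?orbT.
by apply: in_sM_subset (h1' X DX r rs v) => z zs; rewrite mem_cat zs.
Qed.

Lemma div_filter_gabriel : gabriel_filter div_filter.
Proof.
split; first by move=> I [].
split; first exact: div_filterT.
split.
  by move=> I J [_ [s [hs hs']]] hJ IJ; split=> //; exists s; split=> // r /hs /IJ.
split; first exact: div_filter_meet.
split.
  move=> I x [hI [s [hs hs']]]; split; first exact: is_ideal_colon.
  by exists s; split=> // r /hs; case: hI => _ [_ IM]; apply: IM.
move=> J hJ [I [[hI [s [hs hs']]] hc]]; split=> //.
have [s' [h1 h2]] := @div_filter_colon_seq J s (fun r rs => hc r (hs r rs)).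
exists s'; split=> // X DX m; have [v ->] := hs' X DX m.
by rewrite big_seq; apply: in_sM_sum => r; rewrite mem_undup => rs; exact: h2.
Qed.

Lemma div_filter_finite_type : gabriel_finite_type div_filter.
Proof.
move=> I [hI [s [hs hs']]]; exists (ideal_span s); split; first exact: div_filter_span.
by split; [exists s | move=> x; apply: ideal_span_min].
Qed.

Lemma Div_div_filter X : D X -> Div div_filter X.
Proof. by move=> DX I [_ [s [hs hs']]]; apply: sM_full_mod_eq_MI (hs' X DX) hs. Qed.

Lemma Div_div_filter_sM_full X s :
  (forall Y, D Y -> sM_full s Y) -> Div div_filter X -> sM_full s X.
Proof. by move=> hs hX; apply/mod_eq_MI_span_sM_full/hX/div_filter_span. Qed.

End DivisibilityFilter.

Definition mx_image n N (A : 'M[R]_(n, N)) X (x : 'I_n -> X) :=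
  exists y : 'I_N -> X, forall k, \sum_l A k l *: y l = x k.

Definition mx_surj n N (A : 'M[R]_(n, N)) X := forall x : 'I_n -> X, mx_image A x.

Definition maximal_minors n N (A : 'M[R]_(n, N)) : seq R :=
  [seq \det (colsub f A) | f : {ffun 'I_n -> 'I_N} <- enum {ffun 'I_n -> 'I_N}].

Lemma maximal_minors_mem n N (A : 'M[R]_(n, N)) (f : {ffun 'I_n -> 'I_N}) :
  \det (colsub f A) \in maximal_minors A.
Proof. by apply: map_f; rewrite mem_enum. Qed.

Section MatrixImage.
Variables (n N : nat) (A : 'M[R]_(n, N)) (X : lmodType R).

Lemma mx_image_ext (x x' : 'I_n -> X) : mx_image A x -> x =1 x' -> mx_image A x'.
Proof. by move=> [y hy] e; exists y => k; rewrite hy e. Qed.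

Lemma mx_image0 : mx_image A (fun _ => 0 : X).
Proof. by exists (fun _ => 0) => k; rewrite big1 // => l _; rewrite scaler0. Qed.

Lemma mx_imageD (x1 x2 : 'I_n -> X) :
  mx_image A x1 -> mx_image A x2 -> mx_image A (fun k => x1 k + x2 k).
Proof.
move=> [y1 h1] [y2 h2]; exists (fun l => y1 l + y2 l) => k.
by rewrite -h1 -h2 -big_split; apply: eq_bigr => l _; rewrite scalerDr.
Qed.

Lemma mx_image_sum (I : Type) (r : seq I) (P : pred I) (F : I -> 'I_n -> X) :
  (forall i, P i -> mx_image A (F i)) ->
  mx_image A (fun k => \sum_(i <- r | P i) F i k).
Proof.
move=> h; elim: r => [|i r IH].
  by apply: mx_image_ext mx_image0 _ => k; rewrite big_nil.
case Pi: (P i).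
  by apply: mx_image_ext (mx_imageD (h i Pi) IH) _ => k; rewrite big_cons Pi.
by apply: mx_image_ext IH _ => k; rewrite big_cons Pi.
Qed.

(* [colsub f A *m \adj (colsub f A) = det * 1]: the adjugate column [k0],
   spread along the columns picked by [f], is mapped to [det * e_k0]. *)
Lemma mx_image_minor (f : {ffun 'I_n -> 'I_N}) k0 (u : X) :
  mx_image A (fun k => if k == k0 then \det (colsub f A) *: u else 0).
Proof.
set B := colsub f A.
exists (fun l => \sum_t (if f t == l then \adj B t k0 *: u else 0)) => k.
have -> : \sum_l A k l *: \sum_t (if f t == l then \adj B t k0 *: u else 0)
    = \sum_t \sum_l (if l == f t then A k l *: (\adj B t k0 *: u) else 0).
  rewrite exchange_big /=; apply: eq_bigr => l _; rewrite scaler_sumr.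
  by apply: eq_bigr => t _; rewrite eq_sym; case: ifP => _; rewrite ?scaler0.
have -> : \sum_t \sum_l (if l == f t then A k l *: (\adj B t k0 *: u) else 0)
    = (B *m \adj B) k k0 *: u.
  rewrite [in RHS]mxE scaler_suml; apply: eq_bigr => t _.
  by rewrite -big_mkcond big_pred1_eq /B !mxE scalerA.
by rewrite mul_mx_adj mxE; case: (k == k0); rewrite ?mulr1n ?mulr0n ?scale0r.
Qed.

Lemma sM_full_mx_surj : sM_full (maximal_minors A) X -> mx_surj A X.
Proof.
move=> hA x.
apply: (@mx_image_ext (fun k => \sum_k0 (if k0 == k then x k0 else 0))); last first.
  by move=> k; rewrite -big_mkcond big_pred1_eq.
apply: mx_image_sum => k0 _; have [v hv] := hA (x k0).
set u := undup (maximal_minors A).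
apply: (@mx_image_ext (fun k => \sum_(r <- u | r \in u) (if k0 == k then r *: v r else 0))).
  apply: mx_image_sum => r; rewrite mem_undup => /mapP [f _ ->].
  by apply: mx_image_ext (mx_image_minor f k0 (v _)) _ => k; rewrite eq_sym.
by move=> k; case: (k0 == k); [rewrite hv -big_seq | rewrite big1].
Qed.

End MatrixImage.

Section MatrixSurjRow.
Variables (n N : nat) (A : 'M[R]_(n.+1, N)) (X : lmodType R).
Hypothesis A_surj : mx_surj A X.

Lemma mx_surj_row' : mx_surj (row' ord0 A) X.
Proof.
move=> x'; have [y hy] := A_surj (fun i => if unlift ord0 i is Some j then x' j else 0).
exists y => k; rewrite -[x' k]/(if Some k is Some j then x' j else 0) -(liftK ord0 k) -hy.
by apply: eq_bigr => l _; rewrite mxE.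
Qed.

(* Expanding the minor of [A] on the columns [l :: f] along its first row
   writes [det (colsub f (row' ord0 A)) *: w] as [\sum_l det (...) *: y l],
   where [A y = w e_0]. *)
Lemma mx_surj_minor_row' (f : {ffun 'I_n -> 'I_N}) (w : X) :
  in_sM (maximal_minors A) (\det (colsub f (row' ord0 A)) *: w).
Proof.
have [y hy] := A_surj (fun i => if i == ord0 then w else 0).
pose g l : {ffun 'I_n.+1 -> 'I_N} := [ffun i => if unlift ord0 i is Some j then f j else l].
pose c (i : 'I_n.+1) := (-1) ^+ (i + @ord0 n) * \det (row' i (colsub f A)).
have det_g l : \det (colsub (g l) A) = \sum_i A i l * c i.
  rewrite (expand_det_col _ ord0); apply: eq_bigr => i _.
  congr (_ * _); first by rewrite !mxE /g ffunE unlift_none.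
  rewrite /cofactor /c; congr (_ * \det (row' i _)).
  by apply/matrixP => a b; rewrite !mxE /g ffunE liftK.
have -> : \det (colsub f (row' ord0 A)) *: w = \sum_l \det (colsub (g l) A) *: y l.
  have -> : \sum_l \det (colsub (g l) A) *: y l = \sum_i c i *: (if i == ord0 then w else 0).
    under eq_bigr => l _ do rewrite det_g scaler_suml.
    rewrite exchange_big /=; apply: eq_bigr => i _.
    by rewrite -hy scaler_sumr; apply: eq_bigr => l _; rewrite scalerA mulrC.
  rewrite (bigD1 ord0) //= big1 ?addr0; last by move=> i /negPf ->; rewrite scaler0.
  rewrite /c expr0 mul1r; congr (\det _ *: _).
  by apply/matrixP => a b; rewrite !mxE.
by apply: in_sM_sum => l _; apply/in_sM_scale/maximal_minors_mem.
Qed.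

End MatrixSurjRow.

Lemma mx_surj_sM_full n N (A : 'M[R]_(n, N)) X :
  mx_surj A X -> sM_full (maximal_minors A) X.
Proof.
elim: n A => [|n IH] A hA m.
  rewrite -[m]scale1r -(det_mx00 (colsub (ffun0 (card_ord 0) : {ffun 'I_0 -> 'I_N}) A)).
  exact/in_sM_scale/maximal_minors_mem.
have [v ->] := IH _ (mx_surj_row' hA) m.
rewrite big_seq; apply: in_sM_sum => r; rewrite mem_undup => /mapP [f _ ->].
exact: mx_surj_minor_row'.
Qed.

Lemma is_lin_comb n X (z : 'I_n -> X) : is_lin (fun u : 'rV[R]_n => \sum_k u ord0 k *: z k).
Proof.
move=> a u v; rewrite scaler_sumr -big_split; apply: eq_bigr => k _.
by rewrite !mxE scalerDl scalerA.
Qed.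

Lemma comb_delta n X (z : 'I_n -> X) k :
  \sum_l (delta_mx ord0 k : 'rV[R]_n) ord0 l *: z l = z k.
Proof.
rewrite (bigD1 k) //= big1 ?addr0; first by rewrite mxE !eqxx scale1r.
by move=> l /negPf lk; rewrite mxE lk andbF scale0r.
Qed.

Lemma is_lin_rV n X (phi : 'rV[R]_n -> X) u :
  is_lin phi -> phi u = \sum_k u ord0 k *: phi (delta_mx ord0 k).
Proof.
by move=> h; rewrite {1}(row_sum_delta u) is_lin_sum //; apply: eq_bigr => k _; exact: is_linZ.
Qed.

Lemma fg_projective_retract (P : lmodType R) : projective_mod P -> fin_gen_mod P ->
  exists n (p : 'rV[R]_n -> P) (i : P -> 'rV[R]_n),
    [/\ is_lin p, is_lin i & forall x, p (i x) = x].
Proof.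
move=> Pproj [n [gen hgen]].
pose p (u : 'rV[R]_n) := \sum_k u ord0 k *: gen k.
have p_onto y : exists x, p x = y.
  by have [c ->] := hgen y; exists (\row_k c k); apply: eq_bigr => k _; rewrite mxE.
have [i [i_lin pi]] := Pproj _ _ p id (is_lin_comb gen) p_onto (@is_lin_id P).
by exists n, p, i; split=> //; exact: is_lin_comb.
Qed.

Section HomMatrix.
Variables (P Q : lmodType R) (s : P -> Q) (n m : nat).
Variables (pP : 'rV[R]_n -> P) (iP : P -> 'rV[R]_n).
Variables (pQ : 'rV[R]_m -> Q) (iQ : Q -> 'rV[R]_m).
Hypotheses (s_lin : is_lin s) (pP_lin : is_lin pP) (iP_lin : is_lin iP).
Hypotheses (pQ_lin : is_lin pQ) (iQ_lin : is_lin iQ).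
Hypotheses (iPK : forall x, pP (iP x) = x) (iQK : forall x, pQ (iQ x) = x).

Let e k : 'rV[R]_n := delta_mx ord0 k.

(* Row [k] is [(iQ (s (pP e_k)), e_k - iP (pP e_k))]; the second block
   accounts for the kernel of the retraction [pP], so that extending maps
   along [hom_mx] amounts to extending them along [s]. *)
Definition hom_mx : 'M[R]_(n, m + n) :=
  row_mx (\matrix_k iQ (s (pP (e k)))) (\matrix_k (e k - iP (pP (e k)))).

Lemma hom_mx_comb X k (y : 'I_(m + n) -> X) : \sum_l hom_mx k l *: y l =
    \sum_a iQ (s (pP (e k))) ord0 a *: y (lshift n a)
    + \sum_b (e k - iP (pP (e k))) ord0 b *: y (rshift m b).
Proof.
by rewrite big_split_ord; congr (_ + _); apply: eq_bigr => ? _;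
  rewrite ?row_mxEl ?row_mxEr mxE.
Qed.

Lemma D_of_mx_surj X : D_of s X -> mx_surj hom_mx X.
Proof.
move=> sX x; pose h (u : 'rV[R]_n) := \sum_l u ord0 l *: x l.
have h_lin : is_lin h := is_lin_comb x.
have [g [g_lin gs]] := sX (fun a => h (iP a)) (is_lin_comp iP_lin h_lin).
exists (fun l => match split l with
  | inl a => g (pQ (delta_mx ord0 a)) | inr b => x b end) => k.
rewrite hom_mx_comb.
under eq_bigr do rewrite (unsplitK (inl _ _)).
under [X in _ + X]eq_bigr do rewrite (unsplitK (inr _ _)).
rewrite -(is_lin_rV _ (is_lin_comp pQ_lin g_lin)) iQK gs.
rewrite -[\sum_b _ *: x b]/(h (e k - iP (pP (e k)))).
by rewrite (is_linB h_lin) /h comb_delta addrC subrK.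
Qed.

Lemma mx_surj_D_of X : mx_surj hom_mx X -> D_of s X.
Proof.
move=> hX f f_lin; have [y hy] := hX (fun k => f (pP (e k))).
pose g (q : Q) := \sum_a iQ q ord0 a *: y (lshift n a).
pose h (u : 'rV[R]_n) := \sum_b u ord0 b *: y (rshift m b).
have g_lin : is_lin g := is_lin_comp iQ_lin (is_lin_comb _).
have h_lin : is_lin h := is_lin_comb _.
have gh_lin : is_lin (fun u => g (s (pP u)) + h (u - iP (pP u))).
  apply: is_lin_add; first exact: is_lin_comp pP_lin (is_lin_comp s_lin g_lin).
  exact: is_lin_comp (is_lin_sub (@is_lin_id _) (is_lin_comp pP_lin iP_lin)) h_lin.
have gh_f u : g (s (pP u)) + h (u - iP (pP u)) = f (pP u).
  rewrite (is_lin_rV u gh_lin) (is_lin_rV u (is_lin_comp pP_lin f_lin)).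
  by apply: eq_bigr => k _; rewrite -hy hom_mx_comb.
exists g; split=> // a.
by have := gh_f (iP a); rewrite iPK subrr (is_lin0 h_lin) addr0.
Qed.

End HomMatrix.

Lemma D_of_fg_projective_mx (P Q : lmodType R) (s : P -> Q) : is_lin s ->
  projective_mod P -> fin_gen_mod P -> projective_mod Q -> fin_gen_mod Q ->
  exists n N (A : 'M[R]_(n, N)), forall X, D_of s X <-> mx_surj A X.
Proof.
move=> s_lin Pproj Pfg Qproj Qfg.
have [n [pP [iP [pP_lin iP_lin iPK]]]] := fg_projective_retract Pproj Pfg.
have [m [pQ [iQ [pQ_lin iQ_lin iQK]]]] := fg_projective_retract Qproj Qfg.
exists n, (m + n), (hom_mx s pP iP iQ) => X; split.
  exact: D_of_mx_surj.
exact: mx_surj_D_of.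
Qed.

End Divisibility.

Theorem proposition4p4 (R : comNzRingType) (A B : lmodType R) (sigma : A -> B)
  (hA : projective_mod A) (hB : projective_mod B) (hlin : is_lin sigma)
  (hft : finite_type_hom sigma) :
  exists G : (R -> Prop) -> Prop,
    gabriel_filter G /\ gabriel_finite_type G /\
    forall X : lmodType R, D_of sigma X <-> Div G X.
Proof.
have [I [P [Q [s [s_lin [hP [hQ D_sigma]]]]]]] := hft.
exists (div_filter (D_of sigma)); split; first exact: div_filter_gabriel.
split; first exact: div_filter_finite_type.
move=> X; split; first exact: Div_div_filter.
move=> X_div; apply/D_sigma => i.
have [[Pproj Pfg] [Qproj Qfg]] := (hP i, hQ i).
have [n [N [M hM]]] := D_of_fg_projective_mx (s_lin i) Pproj Pfg Qproj Qfg.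
apply/hM/sM_full_mx_surj/(Div_div_filter_sM_full _ X_div) => Y DY.
by apply/mx_surj_sM_full/hM; exact: (proj1 (D_sigma Y) DY i).
Qed.
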